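(* Let $A$ be a real $n\times n$ matrix all of whose eigenvalues $\lambda_1,\dots,\lambda_n$ are real and nonzero, and let $J$ be its Jordan normal form. For $\varepsilon\in\mathbb{C}$ and $a\in\mathbb{R}$ let $L_\varepsilon(a)=-\varepsilon a^2\,\mathrm{Id}+\mathrm{i}a\,\mathrm{Id}+\varepsilon J$ and $\Gamma_\varepsilon=\sup_{a\in\mathbb{R}}|L_\varepsilon(a)^{-1}|$. Let $\Omega(\sigma,\mu)=\{\varepsilon\in\mathbb{C}:\ \mathrm{Re}(\varepsilon)\ge\mu|\mathrm{Im}(\varepsilon)|,\ \sigma\le|\varepsilon|\le2\sigma\}$ with $\mu>\mu_0$, $\mu_0$ sufficiently large, and $\sigma>0$ sufficiently small. Then for every $\varepsilon\in\Omega(\sigma,\mu)$, $L_\varepsilon(a)$ is invertible for all $a\in\mathbb{R}$ and $$\Gamma_\varepsilon\le\sigma^{-1}C_{\lambda,\mu},$$ where $C_{\lambda,\mu}>0$ depends only on $\lambda_1,\dots,\lambda_n$ and $\mu$.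
   Context: $|\cdot|$ denotes a matrix norm on $n\times n$ complex matrices. *)

From HB Require Import structures.
From mathcomp Require Import all_boot all_order all_algebra.
From mathcomp Require Import complex.
From mathcomp Require Import reals.
Set Implicit Arguments. Unset Strict Implicit. Unset Printing Implicit Defensive.
Import Order.TTheory GRing.Theory Num.Theory.
Local Open Scope ring_scope.

Definition cabs (R : rcfType) (z : R[i]) : R := ComplexField.Normc.normc z.

(* The matrix norm |.| : the operator norm induced by the sup-norm on C^n,
   i.e. the maximal absolute row sum. *)
Definition mxnorm (R : rcfType) (n : nat) (M : 'M[R[i]]_n) : R :=
  \big[Num.max/0]_(i < n) \sum_(j < n) cabs (M i j).

(* This is exactly a block-diagonal matrix of Jordan blocks. *)
Definition jordan_matrix (R : nzRingType) (n : nat) (J : 'M[R]_n) : Prop :=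
  forall i j : 'I_n,
    (j != i -> (j : nat) != i.+1 -> J i j = 0) /\
    ((j : nat) = i.+1 -> (J i j = 0 \/ (J i j = 1 /\ J i i = J j j))).

(* J is a Jordan normal form of the real matrix A: a Jordan matrix
   similar to A (the eigenvalues being real, the similarity is real). *)
Definition jordan_form_of (R : comUnitRingType) (n : nat) (A J : 'M[R]_n) : Prop :=
  jordan_matrix J /\ exists P : 'M[R]_n, P \in unitmx /\ J = invmx P *m A *m P.

Definition Lmx (R : rcfType) (n : nat) (J : 'M[R]_n) (eps : R[i]) (a : R)
  : 'M[R[i]]_n :=
  (- eps * ((a ^+ 2)%:C)%C)%:M + (('i * a%:C)%C)%:M + eps *: map_mx (real_complex R) J.

Definition Omega (R : rcfType) (sigma mu : R) (eps : R[i]) : Prop :=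
  mu * `|complex.Im eps| <= complex.Re eps /\ sigma <= cabs eps <= 2 * sigma.

From HB Require Import structures.
From mathcomp Require Import all_boot all_order all_algebra.
From mathcomp Require Import complex.
From mathcomp Require Import reals.
From mathcomp Require Import ring lra zify.
Import Order.TTheory GRing.Theory Num.Theory.
Local Open Scope ring_scope.

(* L_eps(a) is upper bidiagonal. Its superdiagonal entries are eps times 0 or
   1, hence O(sigma). Its diagonal entries eps (lambda_k - a^2) + i a have
   modulus at least a fixed multiple of sigma: if lambda_k - a^2 is comparable
   to lambda_k, the real part Re(eps) (lambda_k - a^2) is large, since
   Re(eps) >= sigma/2 on Omega; otherwise a^2 is close to lambda_k, so |a| is
   large compared with sigma, and so is the imaginary part
   Im(eps) (lambda_k - a^2) + a. Writing L = D (1 - N) with D diagonal and N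
   nilpotent with entries bounded independently of sigma, the Neumann sum of
   N gives L^-1 with entries O(1/sigma). *)

Section ComplexModulus.
Context {R : rcfType}.
Implicit Types x y z : R[i].

Lemma cabsE z : ((cabs z)%:C)%C = `|z|.
Proof. by case: z. Qed.

Lemma cabs_ge0 z : 0 <= cabs z.
Proof. by case: z => a b; apply: sqrtr_ge0. Qed.

Lemma cabs0 : cabs (0 : R[i]) = 0.
Proof. by apply: complexI; rewrite cabsE normr0. Qed.

Lemma cabs1 : cabs (1 : R[i]) = 1.
Proof. by apply: complexI; rewrite cabsE normr1. Qed.

Lemma cabsN z : cabs (- z) = cabs z.
Proof. by apply: complexI; rewrite !cabsE normrN. Qed.

Lemma cabsM x y : cabs (x * y) = cabs x * cabs y.
Proof. by apply: complexI; rewrite rmorphM /= !cabsE normrM. Qed.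

Lemma cabsV z : cabs z^-1 = (cabs z)^-1.
Proof. by apply: complexI; rewrite fmorphV /= !cabsE normfV. Qed.

Lemma cabsR (r : R) : cabs (r%:C)%C = `|r|.
Proof. by rewrite /cabs /= expr0n addr0 sqrtr_sqr. Qed.

Lemma cabsD x y : cabs (x + y) <= cabs x + cabs y.
Proof. by rewrite -lecR rmorphD /= !cabsE ler_normD. Qed.

Lemma cabs_sum (I : finType) (F : I -> R[i]) :
  cabs (\sum_i F i) <= \sum_i cabs (F i).
Proof.
elim/big_ind2: _ => [|u x v y ux vy|//]; first by rewrite cabs0.
exact: le_trans (cabsD x y) (lerD ux vy).
Qed.

Lemma cabs_sqr z : cabs z ^+ 2 = complex.Re z ^+ 2 + complex.Im z ^+ 2.
Proof. by case: z => a b; rewrite /cabs /= sqr_sqrtr // addr_ge0 ?sqr_ge0. Qed.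

Lemma cabs_Re z : `|complex.Re z| <= cabs z.
Proof.
rewrite -ler_sqr ?nnegrE ?normr_ge0 ?cabs_ge0 // real_normK ?num_real //.
by rewrite cabs_sqr lerDl sqr_ge0.
Qed.

Lemma cabs_Im z : `|complex.Im z| <= cabs z.
Proof.
rewrite -ler_sqr ?nnegrE ?normr_ge0 ?cabs_ge0 // real_normK ?num_real //.
by rewrite cabs_sqr lerDr sqr_ge0.
Qed.

End ComplexModulus.

Section MatrixPower.
Context {K : pzRingType} {n : nat}.
Implicit Types N : 'M[K]_n.

(* 'M_n is a ring only when n is a successor, hence powers by iteration. *)
Definition mxpow N k := iter k (mulmx^~ N) 1%:M.

Lemma mxpowS N k : mxpow N k.+1 = mxpow N k *m N.
Proof. by []. Qed.

Lemma mxpow_superdiag N :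
  (forall i j : 'I_n, j != i.+1 :> nat -> N i j = 0) ->
  forall k (i j : 'I_n), (j < i + k)%N -> mxpow N k i j = 0.
Proof.
move=> N_super; elim=> [|k IHk] i j lt_j_ik.
  by rewrite mxE; move: lt_j_ik; rewrite addn0; case: eqP => // ->; rewrite ltnn.
rewrite mxpowS mxE big1 // => l _.
have [lt_l_ik|le_ik_l] := ltnP l (i + k); first by rewrite IHk ?mul0r.
by rewrite N_super ?mulr0 //; apply: contraTneq lt_j_ik => ->; rewrite -leqNgt addnS.
Qed.

Lemma mxpow_superdiag_eq0 N :
  (forall i j : 'I_n, j != i.+1 :> nat -> N i j = 0) -> mxpow N n = 0.
Proof.
by move=> N_super; apply/matrixP => i j; rewrite mxE mxpow_superdiag ?ltn_addl.
Qed.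

Lemma neumann_telescope N m :
  (\sum_(k < m) mxpow N k) *m (1%:M - N) = 1%:M - mxpow N m.
Proof.
rewrite mulmx_suml (eq_bigr (fun k : 'I_m => mxpow N k - mxpow N k.+1)); last first.
  by move=> k _; rewrite mulmxBr mulmx1.
rewrite -(big_mkord xpredT (fun k => mxpow N k - mxpow N k.+1)) -[LHS]opprK -sumrN.
by under eq_bigr do rewrite opprB; rewrite telescope_sumr // opprB.
Qed.

End MatrixPower.

Section EntrywiseBound.
Context {R : rcfType}.

Definition mx_bounded {m p} (A : 'M[R[i]]_(m, p)) (b : R) :=
  forall i j, cabs (A i j) <= b.

Lemma mx_bounded_add m p (A B : 'M[R[i]]_(m, p)) a b :
  mx_bounded A a -> mx_bounded B b -> mx_bounded (A + B) (a + b).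
Proof.
by move=> hA hB i j; rewrite mxE; exact: le_trans (cabsD _ _) (lerD (hA i j) (hB i j)).
Qed.

Lemma mx_bounded_sum (I : finType) m p (F : I -> 'M[R[i]]_(m, p)) (b : I -> R) :
  (forall k, mx_bounded (F k) (b k)) -> mx_bounded (\sum_k F k) (\sum_k b k).
Proof.
move=> F_bounded; elim/big_ind2: _ => [i j|? ? ? ? ? ?|//]; last exact: mx_bounded_add.
by rewrite mxE cabs0.
Qed.

Lemma mx_bounded_mul m p q (A : 'M[R[i]]_(m, p)) (B : 'M[R[i]]_(p, q)) a b :
  0 <= a -> mx_bounded A a -> mx_bounded B b -> mx_bounded (A *m B) (p%:R * (a * b)).
Proof.
move=> a_ge0 hA hB i j; rewrite mxE.
apply: le_trans (cabs_sum _ _) _.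
rewrite mulr_natl -[p in _ *+ p]card_ord -sumr_const.
by apply: ler_sum => l _; rewrite cabsM ler_pM ?cabs_ge0.
Qed.

Lemma mxnorm_le_bounded n (A : 'M[R[i]]_n) b :
  0 <= b -> mx_bounded A b -> mxnorm A <= n%:R * b.
Proof.
move=> b_ge0 hA; apply: bigmax_le => [|i _]; first exact: mulr_ge0.
rewrite mulr_natl -[n in _ *+ n]card_ord -sumr_const.
by apply: ler_sum => j _.
Qed.

Lemma mx_bounded_mxpow n (N : 'M[R[i]]_n) b : 0 <= b -> mx_bounded N b ->
  forall k, mx_bounded (mxpow N k) ((n%:R * b) ^+ k).
Proof.
move=> b_ge0 N_bounded; elim=> [|k IHk].
  by move=> i j; rewrite mxE expr0; case: eqP => _; rewrite ?cabs1 ?cabs0.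
have nb_ge0 : 0 <= (n%:R * b) ^+ k by rewrite exprn_ge0 ?mulr_ge0.
rewrite mxpowS exprSr mulrCA.
exact: mx_bounded_mul.
Qed.

End EntrywiseBound.

Lemma bidiag_invmx_bound {R : rcfType} {n} (L : 'M[R[i]]_n) (d r : R) :
  0 < d -> 0 <= r ->
  (forall i j : 'I_n, j != i -> j != i.+1 :> nat -> L i j = 0) ->
  (forall i, d <= cabs (L i i)) ->
  (forall i j, j != i -> cabs (L i j) <= r * d) ->
  L \in unitmx /\ mxnorm (invmx L) <= n%:R ^+ 2 * (\sum_(k < n) (n%:R * r) ^+ k) / d.
Proof.
move=> d_gt0 r_ge0 L_bidiag L_diag L_off.
have L_diag_gt0 i : 0 < cabs (L i i) := lt_le_trans d_gt0 (L_diag i).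
have L_diag_neq0 i : L i i != 0.
  by apply: contraTneq (L_diag_gt0 i) => ->; rewrite cabs0 ltxx.
pose D := diag_mx (\row_i (L i i)^-1).
pose N := 1%:M - D *m L.
have N_entry i j : N i j = if i == j then 0 else - (L i j / L i i).
  rewrite /N mul_diag_mx !mxE mulrC; case: eqP => [->|_]; last by rewrite sub0r.
  by rewrite mulfV ?subrr.
have N_super (i j : 'I_n) : j != i.+1 :> nat -> N i j = 0.
  move=> ne_j_Si; rewrite N_entry; case: eqP => [//|/eqP ne_ij].
  by rewrite L_bidiag ?mul0r ?oppr0 // eq_sym.
have N_bounded : mx_bounded N r.
  move=> i j; rewrite N_entry; case: eqP => [_|/eqP ne_ij]; first by rewrite cabs0.
  rewrite cabsN cabsM cabsV ler_pdivrMr // (le_trans (L_off _ _ _)) ?ler_wpM2l //.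
  by rewrite eq_sym.
have D_bounded : mx_bounded D d^-1.
  move=> i j; rewrite !mxE; case: eqP => [->|_]; last by rewrite cabs0 invr_ge0 ltW.
  by rewrite cabsV lef_pV2 ?posrE.
pose S := \sum_(k < n) mxpow N k.
have SDL : (S *m D) *m L = 1%:M.
  by rewrite -mulmxA -[D *m L](subKr 1%:M) neumann_telescope mxpow_superdiag_eq0 ?subr0.
have [_ L_unit] := mulmx1_unit SDL.
have -> : invmx L = S *m D by rewrite -[LHS]mul1mx -SDL mulmxK.
have S_bounded : mx_bounded S (\sum_(k < n) (n%:R * r) ^+ k).
  by apply: mx_bounded_sum => k; apply: mx_bounded_mxpow.
have sum_ge0 : 0 <= \sum_(k < n) (n%:R * r) ^+ k.
  by rewrite sumr_ge0 // => k _; rewrite exprn_ge0 ?mulr_ge0.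
split=> //; rewrite expr2 -!mulrA.
apply: mxnorm_le_bounded; last exact: mx_bounded_mul sum_ge0 S_bounded D_bounded.
by apply: mulr_ge0; [exact: ler0n | exact: divr_ge0 sum_ge0 (ltW d_gt0)].
Qed.

Lemma char_poly_upper_trig {K : comNzRingType} {n} {M : 'M[K]_n} :
  (forall i j : 'I_n, (j < i)%N -> M i j = 0) ->
  char_poly M = \prod_i ('X - (M i i)%:P).
Proof.
move=> M_upper; have trig_trM : is_trig_mx M^T.
  by apply/is_trig_mxP => i j lt_ij; rewrite mxE M_upper.
rewrite (eq_bigr (fun i => 'X - (M^T i i)%:P)) => [|i _]; last by rewrite mxE.
rewrite -(char_poly_trig trig_trM) /char_poly -det_tr; congr (\det _).
by apply/matrixP => i j; rewrite !mxE eq_sym.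
Qed.

Lemma jordan_matrix_lower0 {K : nzRingType} {n} {J : 'M[K]_n} :
  jordan_matrix J -> forall i j : 'I_n, (j < i)%N -> J i j = 0.
Proof. by move=> JJ i j lt_ji; apply: (proj1 (JJ i j)); rewrite -?val_eqE /=; lia. Qed.

Lemma jordan_matrix_offdiag_le1 {K : numDomainType} {n} {J : 'M[K]_n} :
  jordan_matrix J -> forall i j : 'I_n, j != i -> `|J i j| <= 1.
Proof.
move=> JJ i j ne_ji; have [eq_j_Si|ne_j_Si] := eqVneq (j : nat) i.+1.
  by case: (proj2 (JJ i j) eq_j_Si) => [|[]] ->; rewrite ?normr0 ?normr1.
by rewrite (proj1 (JJ i j)) ?normr0.
Qed.

Lemma jordan_form_diag_eigenvalue {F : fieldType} {n} (A J : 'M[F]_n) :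
  jordan_form_of A J -> forall i, eigenvalue A (J i i).
Proof.
move=> [JJ [P [P_unit def_J]]] i.
have J_eig : eigenvalue J (J i i).
  rewrite eigenvalue_root_char (char_poly_upper_trig (jordan_matrix_lower0 JJ)).
  by rewrite /root horner_prod (bigD1 i) //= !hornerE subrr mul0r.
have stable_A : stablemx (invmx P) A by apply: stablemx_unit; rewrite unitmx_inv.
have free_P : row_free (invmx P) by rewrite row_free_unit unitmx_inv.
by apply: (eigenvalue_conjmx stable_A free_P); rewrite conjVmx -?def_J.
Qed.

Lemma jordan_form_diag_root {F : fieldType} {n} {lambda : 'I_n -> F} {A J : 'M[F]_n} :
  char_poly A = \prod_(k < n) ('X - (lambda k)%:P) -> jordan_form_of A J ->
  forall i, exists k, J i i = lambda k.
Proof.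
move=> charA JA i.
have : root (char_poly A) (J i i).
  by rewrite -eigenvalue_root_char; apply: jordan_form_diag_eigenvalue.
rewrite charA -(big_map lambda xpredT (fun z => 'X - z%:P)) root_prod_XsubC.
by case/mapP=> k _ ->; exists k.
Qed.

Section DiagonalEntry.
Context {R : rcfType}.

Lemma Omega_mono {s mu mu' : R} {eps : R[i]} :
  mu' <= mu -> Omega s mu eps -> Omega s mu' eps.
Proof.
move=> le_mu [mu_Im_le eps_bounds]; split=> //.
by apply: le_trans mu_Im_le; rewrite ler_wpM2r ?normr_ge0.
Qed.

Lemma diag_entry_cabs_ge (eps : R[i]) (lam a l Lam s : R) :
  0 < l -> l <= `|lam| <= Lam -> Omega s 1 eps -> 0 <= s <= 1 ->
  s * (Lam + l) ^+ 2 <= l / 2 ->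
  l / 4 * s <= cabs (eps * ((lam - a ^+ 2)%:C)%C + ('i * a%:C)%C).
Proof.
move=> l_gt0 /andP[l_le Lam_ge] [] /[!mul1r] Im_le /andP[s_le eps_le] /andP[s_ge0 s_le1] s_small.
set d := lam - a ^+ 2; set w := _ + _.
have [ReW ImW] : complex.Re w = complex.Re eps * d /\ complex.Im w = complex.Im eps * d + a.
  by rewrite /w; case: (eps) => x y /=; split; ring.
have Re_ge : s / 2 <= complex.Re eps.
  have := cabs_sqr eps; have := normr_ge0 (complex.Im eps).
  rewrite -[complex.Im eps ^+ 2]real_normK ?num_real //; nra.
have [lam_le|d_small] := lerP `|lam| (2 * `|d|).
  apply: le_trans (cabs_Re w); rewrite ReW normrM (ger0_norm (le_trans _ Im_le)) //.
  nra.
have a2_ge : l / 2 <= a ^+ 2.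
  have : `|lam| <= `|d| + a ^+ 2.
    by rewrite -{1}(subrK (a ^+ 2) lam) -[X in _ <= _ + X](ger0_norm (sqr_ge0 a)) ler_normD.
  lra.
have a_ge : s * (Lam + l) <= `|a|.
  rewrite -ler_sqr ?nnegrE ?normr_ge0 ?mulr_ge0 //; last by lra.
  rewrite real_normK ?num_real // exprMn; nra.
have Im_eps_le := le_trans (cabs_Im eps) eps_le.
apply: le_trans (cabs_Im w); rewrite ImW addrC.
apply: le_trans (lerB_normD _ _); rewrite normrM.
have := normr_ge0 d; nra.
Qed.

End DiagonalEntry.

Section LmxEntries.
Context {R : rcfType} {n : nat} (J : 'M[R]_n) (eps : R[i]) (a : R).

Lemma Lmx_diag i : Lmx J eps a i i = eps * ((J i i - a ^+ 2)%:C)%C + ('i * a%:C)%C.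
Proof. by rewrite !mxE eqxx !mulr1n rmorphB /=; ring. Qed.

Lemma Lmx_offdiag i j : i != j -> Lmx J eps a i j = eps * ((J i j)%:C)%C.
Proof. by move=> /negbTE ne_ij; rewrite !mxE ne_ij !mulr0n !add0r. Qed.

End LmxEntries.

Lemma Lmx_invmx_bound {R : rcfType} {n} {lambda : 'I_n -> R} {A J : 'M[R]_n}
    {l Lam s : R} {eps : R[i]} (a : R) :
  char_poly A = \prod_(k < n) ('X - (lambda k)%:P) -> jordan_form_of A J ->
  0 < l -> (forall k, l <= `|lambda k| <= Lam) ->
  Omega s 1 eps -> 0 < s -> s <= 1 -> s * (Lam + l) ^+ 2 <= l / 2 ->
  Lmx J eps a \in unitmx /\
  mxnorm (invmx (Lmx J eps a)) <=
    n%:R ^+ 2 * (\sum_(k < n) (n%:R * (8 / l)) ^+ k) / (l / 4 * s).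
Proof.
move=> charA JA l_gt0 lambda_bounds eps_Omega s_gt0 s_le1 s_small.
have [[JJ _] [_ /andP[_ eps_le]]] := (JA, eps_Omega).
have diag_ge i : l / 4 * s <= cabs (Lmx J eps a i i).
  have [k Jii] := jordan_form_diag_root charA JA i.
  by rewrite Lmx_diag Jii (diag_entry_cabs_ge _ _ _ _ Lam) ?lambda_bounds ?(ltW s_gt0) ?s_le1.
have offdiag_le i j : j != i -> cabs (Lmx J eps a i j) <= 8 / l * (l / 4 * s).
  move=> ne_ji; rewrite Lmx_offdiag 1?eq_sym // cabsM cabsR.
  have := jordan_matrix_offdiag_le1 JJ _ _ ne_ji; have := normr_ge0 (J i j).
  have -> : 8 / l * (l / 4 * s) = 2 * s by field; rewrite gt_eqF.
  have := cabs_ge0 eps; nra.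
have bidiag (i j : 'I_n) : j != i -> j != i.+1 :> nat -> Lmx J eps a i j = 0.
  by move=> ne_ji ne_jSi; rewrite Lmx_offdiag 1?eq_sym // (proj1 (JJ i j)) // mulr0.
apply: bidiag_invmx_bound bidiag diag_ge offdiag_le.
  by rewrite mulr_gt0 ?divr_gt0.
by rewrite divr_ge0 ?ltW.
Qed.

Lemma exists_abs_bounds {R : realDomainType} {I : finType} (f : I -> R) :
  (forall i, f i != 0) ->
  exists l Lam : R, [/\ 0 < l, 0 <= Lam & forall i, l <= `|f i| <= Lam].
Proof.
move=> f_neq0; exists (\big[Num.min/1]_i `|f i|), (\big[Num.max/0]_i `|f i|).
split; [|exact: bigmax_ge_id|by move=> i; rewrite bigmin_le le_bigmax].
elim/big_ind: _ => [//|x y x_gt0 y_gt0|i _]; first by rewrite lt_min x_gt0.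
by rewrite normr_gt0.
Qed.

Theorem proposition5p1 (R : realType) (n : nat) (lambda : 'I_n -> R) :
  (forall k, lambda k != 0) ->
  exists mu0 : R, forall mu : R, mu0 < mu ->
  exists C : R, 0 < C /\ exists sigma0 : R, 0 < sigma0 /\
  forall (A J : 'M[R]_n),
    char_poly A = \prod_(k < n) ('X - (lambda k)%:P) ->
    jordan_form_of A J ->
  forall sigma : R, 0 < sigma -> sigma < sigma0 ->
  forall eps : R[i], Omega sigma mu eps ->
  forall a : R,
    Lmx J eps a \in unitmx /\ mxnorm (invmx (Lmx J eps a)) <= C / sigma.
Proof.
move=> /exists_abs_bounds[l [Lam [l_gt0 Lam_ge0 lambda_bounds]]].
pose M := n%:R ^+ 2 * \sum_(k < n) (n%:R * (8 / l)) ^+ k.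
have M_ge0 : 0 <= M.
  rewrite mulr_ge0 ?exprn_ge0 ?sumr_ge0 // => k _.
  by rewrite exprn_ge0 // mulr_ge0 // divr_ge0 // ltW.
exists 1 => mu mu_gt1; exists (4 * (M + 1) / l); split; first by rewrite !divr_gt0 //; lra.
exists (Num.min 1 (l / 2 / (Lam + l) ^+ 2)); split.
  by rewrite lt_min ltr01 !divr_gt0 // exprn_gt0 // ltr_wpDl.
move=> A J charA JA s s_gt0 s_lt eps eps_Omega a.
have [s_le1 s_small] : s <= 1 /\ s * (Lam + l) ^+ 2 <= l / 2.
  move: s_lt; rewrite lt_min ltr_pdivlMr ?exprn_gt0 ?ltr_wpDl // => /andP[].
  by split; apply: ltW.
have [L_unit L_norm] := Lmx_invmx_bound a charA JA l_gt0 lambda_bounds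
  (Omega_mono (ltW mu_gt1) eps_Omega) s_gt0 s_le1 s_small.
split=> //; apply: le_trans L_norm _; rewrite -/M.
have -> : M / (l / 4 * s) = 4 * M / l / s by field; rewrite ?gt_eqF.
by rewrite ler_pM2r ?invr_gt0 // ler_pM2r ?invr_gt0 //; lra.
Qed.
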